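(* Let $\alpha\in(0,\pi)$ and let $G\subset\mathbb{R}^2$ be a domain (not necessarily contained in $S_\alpha$) such that for some $r>0$, \[ G\cap B^2(r)=S_\alpha\cap B^2(r). \] Then $A_G\ge A_{S_\alpha}$.
   Context: $S_\alpha=\{\rho e^{it}:\rho>0,\ t\in(0,\alpha)\}\subset\mathbb{R}^2=\mathbb{C}$, and $B^2(r)$ is the open disk of radius $r$ centered at the origin. For a domain $G\subsetneq\mathbb{R}^n$ let $d_G(x)=d(x,\partial G)$; $k_G(x,y)=\inf_\gamma\int_\gamma\frac{|dx|}{d_G(x)}$ over rectifiable curves $\gamma\subset G$ joining $x,y$ (quasihyperbolic distance); $j_G(x,y)=\log\left(1+\frac{|x-y|}{\min\{d_G(x),d_G(y)\}}\right)$; and $A_G=\inf\{A\ge1: k_G\le A\,j_G\text{ on }G\times G\}$ (with $\inf\emptyset=+\infty$). *)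

From Stdlib Require Import Reals Lra ClassicalEpsilon.
Open Scope R_scope.

Inductive ER : Type := Fin (r : R) | PInf.

Definition Ele (a b : ER) : Prop :=
  match a, b with
  | _, PInf => True
  | PInf, Fin _ => False
  | Fin x, Fin y => x <= y
  end.

(* supremum of a set of reals in (-oo, +oo]; +oo if unbounded above.
   (The value on the empty set is an arbitrary 0; it is never used on empty sets.) *)
Definition Rsup (E : R -> Prop) : ER :=
  match excluded_middle_informative (bound E) with
  | left Hb =>
      match excluded_middle_informative (exists x, E x) with
      | left Hn => Fin (proj1_sig (completeness E Hb Hn))
      | right _ => Fin 0
      end
  | right _ => PInf
  end.

(* infimum of a nonempty set of reals bounded below (default 0 otherwise;
   only used on nonempty sets bounded below by 0). *)
Definition Rinf_R (E : R -> Prop) : R :=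
  match Rsup (fun x => E (- x)) with
  | Fin m => - m
  | PInf => 0
  end.

Definition pt : Type := (R * R)%type.

Definition dist (p q : pt) : R :=
  sqrt ((fst p - fst q) ^ 2 + (snd p - snd q) ^ 2).

Definition origin : pt := (0, 0).

Definition Ball (r : R) (p : pt) : Prop := dist p origin < r.

Definition Sector (alpha : R) (p : pt) : Prop :=
  exists rho t, 0 < rho /\ 0 < t < alpha /\ p = (rho * cos t, rho * sin t).

Definition is_open (U : pt -> Prop) : Prop :=
  forall x, U x -> exists e, 0 < e /\ forall y, dist x y < e -> U y.

Definition is_connected (G : pt -> Prop) : Prop :=
  forall U V : pt -> Prop, is_open U -> is_open V ->
    (forall p, G p -> U p \/ V p) ->
    (forall p, ~ (G p /\ U p /\ V p)) ->
    (exists p, G p /\ U p) -> (exists p, G p /\ V p) -> False.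

Definition domain (G : pt -> Prop) : Prop :=
  (exists p, G p) /\ is_open G /\ is_connected G.

Definition boundary (G : pt -> Prop) (z : pt) : Prop :=
  forall e, 0 < e ->
    (exists y, dist z y < e /\ G y) /\ (exists y, dist z y < e /\ ~ G y).

Definition dG (G : pt -> Prop) (x : pt) : R :=
  Rinf_R (fun v => exists z, boundary G z /\ v = dist x z).

Fixpoint sumR (f : nat -> R) (n : nat) : R :=
  match n with
  | O => 0
  | S m => sumR f m + f m
  end.

Definition partition (a b : R) (n : nat) (p : nat -> R) : Prop :=
  p O = a /\ p n = b /\ forall i, (i < n)%nat -> p i <= p (S i).

Definition arclen (g : R -> pt) (a b : R) : ER :=
  Rsup (fun s => exists n p, partition a b n p /\
          s = sumR (fun i => dist (g (p i)) (g (p (S i)))) n).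

Definition arclenR (g : R -> pt) (a b : R) : R :=
  match arclen g a b with Fin L => L | PInf => 0 end.

Definition rectifiable (g : R -> pt) : Prop :=
  exists L, arclen g 0 1 = Fin L.

Definition path_in (G : pt -> Prop) (x y : pt) (g : R -> pt) : Prop :=
  g 0 = x /\ g 1 = y /\
  (forall t, 0 <= t <= 1 -> G (g t)) /\
  (forall t, 0 <= t <= 1 -> forall e, 0 < e -> exists d, 0 < d /\
     forall s, 0 <= s <= 1 -> Rabs (s - t) < d -> dist (g s) (g t) < e).

(* int_gamma w |dx| : Riemann-Stieltjes integral of w o gamma against the
   arc-length function, as the sup of lower Darboux sums *)
Definition line_integral (w : pt -> R) (g : R -> pt) : ER :=
  Rsup (fun s => exists n p, partition 0 1 n p /\
          s = sumR (fun i =>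
                 Rinf_R (fun v => exists t, p i <= t <= p (S i) /\ v = w (g t))
                 * arclenR g (p i) (p (S i))) n).

Definition kG (G : pt -> Prop) (x y : pt) : R :=
  Rinf_R (fun L => exists g, path_in G x y g /\ rectifiable g /\
            line_integral (fun z => / dG G z) g = Fin L).

Definition jG (G : pt -> Prop) (x y : pt) : R :=
  ln (1 + dist x y / Rmin (dG G x) (dG G y)).

Definition AG_set (G : pt -> Prop) (A : R) : Prop :=
  1 <= A /\ forall x y, G x -> G y -> kG G x y <= A * jG G x y.

Definition AG (G : pt -> Prop) : ER :=
  match excluded_middle_informative (exists A, AG_set G A) with
  | left _ => Fin (Rinf_R (AG_set G))
  | right _ => PInf
  end.

From Stdlib Require Import Reals Lra Lia Rgeom ClassicalEpsilon Classical FunctionalExtensionality PropExtensionality.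
Open Scope R_scope.

(* A dilation z |-> c z maps S_alpha onto itself and multiplies d_S and arc
   length by c, so it leaves k_S and j_S invariant.  For x, y in S_alpha and c
   small, c x and c y lie in the disk where G and S_alpha agree, hence
   j_G(c x, c y) = j_S(x, y).  A path from c x to c y in G either stays in that
   disk, where it is the dilation of a path in S_alpha from x to y, or reaches
   distance 2^n |c x| from the origin; as the origin lies on the boundary of G,
   d_G(z) <= |z|, so crossing each of the n annuli
   2^k |c x| <= |z| <= 2^(k+1) |c x| costs at least 1/2.  With n/2 > k_S(x, y)
   this gives k_S(x, y) <= k_G(c x, c y) <= A j_G(c x, c y) = A j_S(x, y). *)

Lemma Rsup_spec (E : R -> Prop) :
  (exists m, Rsup E = Fin m /\ is_lub E m) \/
  (Rsup E = Fin 0 /\ ~ (exists x, E x)) \/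
  (Rsup E = PInf /\ ~ bound E).
Proof.
  unfold Rsup.
  destruct (excluded_middle_informative (bound E)) as [Hb|Hb].
  - destruct (excluded_middle_informative (exists x, E x)) as [Hn|Hn].
    + left. destruct (completeness E Hb Hn) as [m Hm]. simpl. eauto.
    + right; left; split; auto.
  - right; right; split; auto.
Qed.

Lemma pred_ext (E F : R -> Prop) : (forall x, E x <-> F x) -> E = F.
Proof.
  intro H. apply functional_extensionality; intro x; apply propositional_extensionality; auto.
Qed.

Lemma Rsup_le (E : R -> Prop) L s : Rsup E = Fin L -> E s -> s <= L.
Proof.
  intros HL Hs. destruct (Rsup_spec E) as [[m [H1 H2]]|[[H1 H2]|[H1 H2]]].
  - rewrite HL in H1; injection H1; intros ->. apply (proj1 H2); auto.
  - exfalso; eauto.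
  - congruence.
Qed.

Lemma Rsup_nonneg (E : R -> Prop) L :
  (forall s, E s -> 0 <= s) -> Rsup E = Fin L -> 0 <= L.
Proof.
  intros Hp HL. destruct (Rsup_spec E) as [[m [H1 H2]]|[[H1 H2]|[H1 H2]]].
  - rewrite HL in H1; injection H1; intros ->.
    destruct (classic (exists x, E x)) as [[x Hx]|Hn].
    + apply Rle_trans with x; auto. apply (proj1 H2); auto.
    + assert (m <= m - 1) by (apply (proj2 H2); intros x Hx; exfalso; eauto). lra.
  - rewrite HL in H1; injection H1; intros ->; lra.
  - congruence.
Qed.

Lemma Rinf_le (E : R -> Prop) lb s : (forall x, E x -> lb <= x) -> E s -> Rinf_R E <= s.
Proof.
  intros Hlb Hs. unfold Rinf_R.
  destruct (Rsup_spec (fun x => E (- x))) as [[m [H1 H2]]|[[H1 H2]|[H1 H2]]]; rewrite H1.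
  - assert (-s <= m) by (apply (proj1 H2); rewrite (Ropp_involutive s); auto). lra.
  - exfalso; apply H2; exists (-s); rewrite Ropp_involutive; auto.
  - exfalso; apply H2; exists (-lb); intros x Hx. specialize (Hlb _ Hx); lra.
Qed.

Lemma Rinf_ge (E : R -> Prop) lb :
  (forall x, E x -> lb <= x) -> (exists s, E s) -> lb <= Rinf_R E.
Proof.
  intros Hlb [s Hs]. unfold Rinf_R.
  destruct (Rsup_spec (fun x => E (- x))) as [[m [H1 H2]]|[[H1 H2]|[H1 H2]]]; rewrite H1.
  - assert (m <= -lb). { apply (proj2 H2). intros x Hx. specialize (Hlb _ Hx); lra. } lra.
  - exfalso; apply H2; exists (-s); rewrite Ropp_involutive; auto.
  - exfalso; apply H2; exists (-lb); intros x Hx. specialize (Hlb _ Hx); lra.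
Qed.

Lemma Rinf_empty (E : R -> Prop) : ~ (exists s, E s) -> Rinf_R E = 0.
Proof.
  intros Hn. unfold Rinf_R.
  destruct (Rsup_spec (fun x => E (- x))) as [[m [H1 H2]]|[[H1 H2]|[H1 H2]]]; rewrite H1.
  - exfalso. destruct (classic (exists x, E (-x))) as [[x Hx]|Hn2]; [eauto|].
    assert (m <= m - 1). { apply (proj2 H2). intros x Hx; exfalso; eauto. } lra.
  - lra.
  - reflexivity.
Qed.

Lemma Rinf_nonneg (E : R -> Prop) : (forall x, E x -> 0 <= x) -> 0 <= Rinf_R E.
Proof.
  intros H. destruct (classic (exists s, E s)) as [Hn|Hn].
  - apply Rinf_ge; auto.
  - rewrite Rinf_empty; auto; lra.
Qed.

Lemma Rinf_approx (E : R -> Prop) lb d :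
  (forall x, E x -> lb <= x) -> (exists s, E s) -> 0 < d ->
  exists s, E s /\ s < Rinf_R E + d.
Proof.
  intros Hlb Hn Hd. apply NNPP; intro Hc.
  assert (Rinf_R E + d <= Rinf_R E); [|lra].
  apply Rinf_ge; auto. intros x Hx. apply Rnot_lt_le. intro; apply Hc; eauto.
Qed.

Lemma Rinf_local (E F : R -> Prop) m :
  (forall x, E x -> 0 <= x) -> (forall x, F x -> 0 <= x) -> E m -> F m ->
  (forall v, v <= m -> (E v <-> F v)) -> Rinf_R E = Rinf_R F.
Proof.
  (* m lies in both sets, so only elements below m matter for either infimum. *)
  assert (Hle : forall E F : R -> Prop, (forall x, E x -> 0 <= x) -> (forall x, F x -> 0 <= x) ->
            E m -> F m -> (forall v, v <= m -> E v -> F v) -> Rinf_R F <= Rinf_R E).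
  { intros E' F' HE HF Em Fm H. apply Rinf_ge; [|eauto].
    intros v Ev. destruct (Rle_lt_dec v m).
    - apply Rinf_le with 0; auto.
    - apply Rle_trans with m; [|lra]. apply Rinf_le with 0; auto. }
  intros HE HF Em Fm Hagree.
  apply Rle_antisym; apply Hle; auto; intros v Hv; apply Hagree; auto.
Qed.

Definition scaleER (c : R) (x : ER) : ER :=
  match x with Fin m => Fin (c * m) | PInf => PInf end.

Lemma Rsup_scale (E : R -> Prop) c : 0 < c ->
  Rsup (fun s => exists u, E u /\ s = c * u) = scaleER c (Rsup E).
Proof.
  intros Hc.
  set (F := fun s => exists u, E u /\ s = c * u).
  destruct (Rsup_spec E) as [[m [H1 H2]]|[[H1 H2]|[H1 H2]]]; rewrite H1; simpl.
  - destruct (Rsup_spec F) as [[m' [H1' H2']]|[[H1' H2']|[H1' H2']]]; rewrite H1'.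
    + f_equal. apply (is_lub_u F); auto. split.
      * intros s [u [Hu ->]]. apply Rmult_le_compat_l; [lra|]. apply (proj1 H2); auto.
      * intros b Hb. assert (Hm : m <= b / c).
        2:{ apply Rmult_le_compat_l with (r:=c) in Hm; [|lra].
            replace (c*(b/c)) with b in Hm by (field; lra); exact Hm. }
        apply (proj2 H2). intros u Hu. assert (c * u <= b) by (apply Hb; exists u; auto).
        apply Rmult_le_reg_l with c; [lra|]. field_simplify; lra.
    + exfalso. destruct (classic (exists x, E x)) as [[x Hx]|Hn].
      * apply H2'; exists (c*x); exists x; auto.
      * assert (m <= m - 1) by (apply (proj2 H2); intros x Hx; exfalso; eauto). lra.
    + exfalso. apply H2'. exists (c * m). intros s [u [Hu ->]].
      apply Rmult_le_compat_l; [lra|]. apply (proj1 H2); auto.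
  - destruct (Rsup_spec F) as [[m' [H1' H2']]|[[H1' H2']|[H1' H2']]]; rewrite H1'.
    + exfalso. assert (m' <= m' - 1); [|lra].
      apply (proj2 H2'). intros s [u [Hu _]]; exfalso; eauto.
    + f_equal; ring.
    + exfalso. apply H2'. exists 0. intros s [u [Hu _]]; exfalso; eauto.
  - destruct (Rsup_spec F) as [[m' [H1' H2']]|[[H1' H2']|[H1' H2']]]; rewrite H1'; auto.
    + exfalso. apply H2. exists (m' / c). intros u Hu.
      assert (c * u <= m') by (apply (proj1 H2'); exists u; auto).
      apply Rmult_le_reg_l with c; [lra|]. field_simplify; lra.
    + exfalso. apply H2. exists 0. intros u Hu. exfalso; apply H2'; exists (c*u); exists u; auto.
Qed.

Lemma Rinf_scale {T : Type} (P : T -> Prop) (f : T -> R) c : 0 < c ->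
  Rinf_R (fun v => exists t, P t /\ v = c * f t) =
  c * Rinf_R (fun v => exists t, P t /\ v = f t).
Proof.
  intros Hc. unfold Rinf_R.
  rewrite (pred_ext (fun x => exists t, P t /\ - x = c * f t)
     (fun s => exists u, (exists t, P t /\ - u = f t) /\ s = c * u)).
  - rewrite Rsup_scale; auto.
    destruct (Rsup (fun x => exists t, P t /\ - x = f t)); simpl; ring.
  - intros x; split.
    + intros [t [Ht Hx]]. exists (x / c). split; [|field; lra].
      exists t; split; auto. apply Rmult_eq_reg_l with c; [|lra].
      rewrite <- Hx. field; lra.
    + intros [u [[t [Ht Hu]] ->]]. exists t; split; auto. rewrite <- Hu; ring.
Qed.

Lemma Rinv_nonneg x : 0 <= x -> 0 <= / x.
Proof.
  intros H. destruct (Req_dec x 0) as [->|Hn]; [rewrite Rinv_0; lra|].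
  left; apply Rinv_0_lt_compat; lra.
Qed.

Lemma Rmin_mult_l c a b : 0 < c -> Rmin (c * a) (c * b) = c * Rmin a b.
Proof.
  intros Hc. unfold Rmin. destruct (Rle_dec a b); destruct (Rle_dec (c*a) (c*b)); auto.
  - exfalso; apply n; apply Rmult_le_compat_l; lra.
  - exfalso; apply n. apply Rmult_le_reg_l with c; auto.
Qed.

Lemma sumR_ext f g n : (forall i, (i < n)%nat -> f i = g i) -> sumR f n = sumR g n.
Proof.
  induction n; intros H; simpl; auto.
  rewrite IHn by (intros; apply H; lia). rewrite H by lia; auto.
Qed.

Lemma sumR_scale f c n : sumR (fun i => c * f i) n = c * sumR f n.
Proof. induction n; simpl; [ring|]. rewrite IHn; ring. Qed.

Lemma sumR_nonneg f n : (forall i, (i < n)%nat -> 0 <= f i) -> 0 <= sumR f n.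
Proof.
  induction n; intros H; simpl; [lra|].
  pose proof (H n ltac:(lia)). pose proof (IHn ltac:(intros; apply H; lia)). lra.
Qed.

Lemma sumR_lb f c n : (forall i, (i < n)%nat -> c <= f i) -> INR n * c <= sumR f n.
Proof.
  induction n; intros H; cbn [sumR]; [simpl; lra|]. rewrite S_INR.
  pose proof (H n ltac:(lia)). pose proof (IHn ltac:(intros; apply H; lia)). lra.
Qed.

Lemma sumR_shift f n : sumR f (S n) = f O + sumR (fun i => f (S i)) n.
Proof. induction n; simpl in *; [ring|]. rewrite IHn. ring. Qed.

Definition sc (c : R) (p : pt) : pt := (c * fst p, c * snd p).
Definition nrm (p : pt) : R := dist p origin.

Lemma dist_tri p q z : dist p q <= dist p z + dist z q.
Proof.
  assert (E : forall a b, dist a b = dist_euc (fst a) (snd a) (fst b) (snd b)).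
  { intros. unfold dist, dist_euc. rewrite !Rsqr_pow2. reflexivity. }
  rewrite !E. apply triangle.
Qed.

Lemma dist_sym p q : dist p q = dist q p.
Proof. unfold dist. f_equal. ring. Qed.

Lemma dist_nonneg p q : 0 <= dist p q.
Proof. apply sqrt_pos. Qed.

Lemma dist_refl p : dist p p = 0.
Proof.
  unfold dist. replace ((fst p - fst p) ^ 2 + (snd p - snd p) ^ 2) with 0 by ring.
  apply sqrt_0.
Qed.

Lemma nrm_sub_le p q : nrm p - nrm q <= dist p q.
Proof. unfold nrm. pose proof (dist_tri p origin q). rewrite (dist_sym q origin) in *. lra. Qed.

Lemma nrm_le_dist p q : nrm p <= nrm q + dist q p.
Proof. pose proof (nrm_sub_le p q). rewrite dist_sym. lra. Qed.

Lemma dist_sc c p q : 0 < c -> dist (sc c p) (sc c q) = c * dist p q.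
Proof.
  intros Hc. unfold dist, sc; cbn [fst snd].
  replace ((c * fst p - c * fst q) ^ 2 + (c * snd p - c * snd q) ^ 2)
    with (c ^ 2 * ((fst p - fst q) ^ 2 + (snd p - snd q) ^ 2)) by ring.
  rewrite sqrt_mult_alt by (apply pow_le; lra).
  f_equal. rewrite <- Rsqr_pow2. apply sqrt_Rsqr. lra.
Qed.

Lemma nrm_sc c p : 0 < c -> nrm (sc c p) = c * nrm p.
Proof.
  intros. unfold nrm. replace origin with (sc c origin) at 1.
  - apply dist_sc; auto.
  - unfold sc, origin; cbn [fst snd]. f_equal; ring.
Qed.

Lemma sc_inv c p : 0 < c -> sc c (sc (/ c) p) = p.
Proof. intros. unfold sc; destruct p; cbn [fst snd]. f_equal; field; lra. Qed.

Lemma sc_inv' c p : 0 < c -> sc (/ c) (sc c p) = p.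
Proof. intros. unfold sc; destruct p; cbn [fst snd]. f_equal; field; lra. Qed.

Lemma sector_sc alpha c p : 0 < c -> Sector alpha p -> Sector alpha (sc c p).
Proof.
  intros Hc [rho [t [Hr [Ht ->]]]]. exists (c * rho), t. split; [nra|split; auto].
  unfold sc; cbn [fst snd]. f_equal; ring.
Qed.

Lemma sector_nrm_pos alpha p : Sector alpha p -> 0 < nrm p.
Proof.
  intros [rho [t [Hr [Ht ->]]]]. unfold nrm, dist, origin; cbn [fst snd].
  replace ((rho * cos t - 0) ^ 2 + (rho * sin t - 0) ^ 2)
    with (rho² * ((sin t)² + (cos t)²)) by (unfold Rsqr; ring).
  rewrite sin2_cos2, Rmult_1_r, sqrt_Rsqr; lra.
Qed.

Lemma boundary_sector_sc alpha c z :
  0 < c -> boundary (Sector alpha) z -> boundary (Sector alpha) (sc c z).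
Proof.
  intros Hc Hb e He. assert (He' : 0 < e / c) by (apply Rdiv_lt_0_compat; lra).
  assert (Hsc : forall y, dist z y < e / c -> dist (sc c z) (sc c y) < e).
  { intros y Hy. rewrite dist_sc by auto.
    apply Rmult_lt_compat_l with (r := c) in Hy; auto.
    replace (c * (e / c)) with e in Hy by (field; lra). auto. }
  destruct (Hb _ He') as [[y1 [Hy1 Hs1]] [y2 [Hy2 Hs2]]]. split.
  - exists (sc c y1). split; auto. apply sector_sc; auto.
  - exists (sc c y2). split; auto.
    intro Hs. apply Hs2. rewrite <- (sc_inv' c y2) by auto.
    apply sector_sc; auto. apply Rinv_0_lt_compat; auto.
Qed.

Lemma boundary_sector_origin alpha : 0 < alpha < PI -> boundary (Sector alpha) origin.
Proof.
  intros Ha e He. split.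
  - exists (e/2 * cos (alpha/2), e/2 * sin (alpha/2)). split.
    + unfold dist, origin; cbn [fst snd].
      replace ((0 - e / 2 * cos (alpha / 2)) ^ 2 + (0 - e / 2 * sin (alpha / 2)) ^ 2)
        with ((e/2)² * ((sin (alpha/2))² + (cos (alpha/2))²)) by (unfold Rsqr; ring).
      rewrite sin2_cos2, Rmult_1_r, sqrt_Rsqr; lra.
    + exists (e/2), (alpha/2). split; [lra|split; [lra|auto]].
  - exists (0, - (e/2)). split.
    + unfold dist, origin; cbn [fst snd].
      replace ((0 - 0) ^ 2 + (0 - - (e / 2)) ^ 2) with ((e/2)²) by (unfold Rsqr; ring).
      rewrite sqrt_Rsqr; lra.
    + intros [rho [t [Hr [Ht Heq]]]]. injection Heq; intros H1 H2.
      assert (0 < sin t) by (apply sin_gt_0; lra). nra.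
Qed.

Lemma boundary_local (U V : pt -> Prop) r z :
  (forall p, nrm p < r -> (U p <-> V p)) ->
  nrm z < r -> boundary U z -> boundary V z.
Proof.
  intros Hl Hz Hb e He.
  pose proof (Rmin_l e (r - nrm z)) as Hm1. pose proof (Rmin_r e (r - nrm z)) as Hm2.
  assert (He' : 0 < Rmin e (r - nrm z)) by (apply Rmin_glb_lt; lra).
  assert (Hin : forall y, dist z y < Rmin e (r - nrm z) -> nrm y < r /\ dist z y < e).
  { intros y Hy. pose proof (nrm_le_dist y z). lra. }
  destruct (Hb _ He') as [[y1 [Hy1 Hs1]] [y2 [Hy2 Hs2]]]. split.
  - exists y1. destruct (Hin _ Hy1). split; auto. apply Hl; auto.
  - exists y2. destruct (Hin _ Hy2). split; auto. rewrite <- Hl; auto.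
Qed.

Lemma dG_nonneg U w : 0 <= dG U w.
Proof. apply Rinf_nonneg. intros x [z [_ ->]]. apply dist_nonneg. Qed.

Lemma dG_le_nrm U w : boundary U origin -> dG U w <= nrm w.
Proof.
  intros Hb. apply Rinf_le with 0; [|exists origin; auto].
  intros x [z [_ ->]]. apply dist_nonneg.
Qed.

Lemma dG_pos U w : is_open U -> U w -> boundary U origin -> 0 < dG U w.
Proof.
  intros Ho Hw Hb. destruct (Ho w Hw) as [e [He Hball]].
  apply Rlt_le_trans with e; auto.
  apply Rinf_ge; [|exists (dist w origin); exists origin; auto].
  intros x [z [Hz ->]]. apply Rnot_lt_le. intro Hlt.
  assert (He2 : 0 < e - dist w z) by lra.
  destruct (Hz _ He2) as [_ [y [Hy Hny]]]. apply Hny. apply Hball.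
  pose proof (dist_tri w y z). lra.
Qed.

Lemma dG_sector_sc alpha c z : 0 < c -> dG (Sector alpha) (sc c z) = c * dG (Sector alpha) z.
Proof.
  intros Hc. unfold dG.
  rewrite <- (Rinf_scale (boundary (Sector alpha)) (fun b => dist z b) c Hc).
  f_equal. apply pred_ext. intros v; split.
  - intros [b [Hb ->]]. exists (sc (/c) b). split.
    + apply boundary_sector_sc; auto. apply Rinv_0_lt_compat; auto.
    + rewrite <- dist_sc by auto. rewrite sc_inv; auto.
  - intros [b [Hb ->]]. exists (sc c b). split.
    + apply boundary_sector_sc; auto.
    + rewrite dist_sc; auto.
Qed.

(* The nearest boundary point of w is at distance at most |w| (the origin),
   hence inside the disk of radius r where U and V agree. *)
Lemma dG_local (U V : pt -> Prop) r w :
  (forall p, nrm p < r -> (U p <-> V p)) ->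
  boundary V origin -> nrm w < r / 2 -> dG U w = dG V w.
Proof.
  intros Hl HbV Hw.
  assert (Hl' : forall p, nrm p < r -> (V p <-> U p)) by (intros p Hp; symmetry; auto).
  assert (HbU : boundary U origin).
  { apply boundary_local with V r; auto.
    unfold nrm; rewrite dist_refl. pose proof (dist_nonneg w origin). unfold nrm in Hw; lra. }
  unfold dG. apply Rinf_local with (dist w origin).
  - intros x [z [_ ->]]; apply dist_nonneg.
  - intros x [z [_ ->]]; apply dist_nonneg.
  - exists origin; auto.
  - exists origin; auto.
  - intros v Hv.
    assert (Hz : forall z, dist w z <= dist w origin -> nrm z < r).
    { intros z Hz. pose proof (nrm_le_dist z w). unfold nrm in *. lra. }
    split; intros [z [Hb ->]]; exists z; split; auto.
    + apply boundary_local with U r; auto.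
    + apply boundary_local with V r; auto.
Qed.

Lemma jG_sc U V c x y : 0 < c ->
  dG U (sc c x) = c * dG V x -> dG U (sc c y) = c * dG V y ->
  jG U (sc c x) (sc c y) = jG V x y.
Proof.
  intros Hc Hx Hy. unfold jG. rewrite Hx, Hy, dist_sc, Rmin_mult_l by auto.
  do 2 f_equal. unfold Rdiv. rewrite Rinv_mult.
  replace (c * dist x y * (/ c * / Rmin (dG V x) (dG V y))) with
    (dist x y * / Rmin (dG V x) (dG V y) * (c * / c)) by ring.
  rewrite Rinv_r by lra. ring.
Qed.

Lemma partition_range a b n p : partition a b n p -> forall i, (i <= n)%nat -> a <= p i <= b.
Proof.
  intros [H0 [Hn Hm]].
  assert (Hup : forall i, (i <= n)%nat -> a <= p i).
  { induction i; intros Hi; [rewrite H0; lra|].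
    pose proof (Hm i ltac:(lia)). pose proof (IHi ltac:(lia)). lra. }
  assert (Hdn : forall k i, (i + k = n)%nat -> p i <= b).
  { induction k; intros i Hi.
    - replace i with n by lia. rewrite Hn; lra.
    - pose proof (Hm i ltac:(lia)). pose proof (IHk (S i) ltac:(lia)). lra. }
  intros i Hi. split; auto. apply (Hdn (n - i)%nat). lia.
Qed.

Lemma arclen_sc g c a b : 0 < c ->
  arclen (fun t => sc c (g t)) a b = scaleER c (arclen g a b).
Proof.
  intros Hc. unfold arclen. rewrite <- Rsup_scale by auto. f_equal. apply pred_ext.
  intros s; split.
  - intros [n [p [Hp ->]]]. exists (sumR (fun i => dist (g (p i)) (g (p (S i)))) n).
    split; [eauto|]. rewrite <- sumR_scale. apply sumR_ext. intros; apply dist_sc; auto.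
  - intros [u [[n [p [Hp ->]]] ->]]. exists n, p. split; auto.
    rewrite <- sumR_scale. apply sumR_ext. intros; symmetry; apply dist_sc; auto.
Qed.

Lemma arclenR_sc g c a b : 0 < c -> arclenR (fun t => sc c (g t)) a b = c * arclenR g a b.
Proof.
  intros Hc. unfold arclenR. rewrite arclen_sc by auto.
  destruct (arclen g a b); simpl; ring.
Qed.

Lemma arclenR_nonneg g a b : 0 <= arclenR g a b.
Proof.
  unfold arclenR. destruct (arclen g a b) eqn:E; [|lra].
  refine (Rsup_nonneg _ r _ E). intros s [n [p [_ ->]]].
  apply sumR_nonneg. intros; apply dist_nonneg.
Qed.

Lemma arclen_chord g a b L : arclen g a b = Fin L -> a <= b -> dist (g a) (g b) <= L.
Proof.
  intros HL Hab. apply (Rsup_le _ _ _ HL).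
  exists 1%nat, (fun i => match i with O => a | _ => b end). split.
  - split; [auto|split; [auto|]]. intros i Hi. destruct i; simpl; [lra|lia].
  - simpl. ring.
Qed.

Lemma arclen_start_bound g L t : arclen g 0 1 = Fin L -> 0 <= t <= 1 -> dist (g 0) (g t) <= L.
Proof.
  intros HL Ht. apply Rle_trans with (dist (g 0) (g t) + dist (g t) (g 1)).
  - pose proof (dist_nonneg (g t) (g 1)); lra.
  - apply (Rsup_le _ _ _ HL).
    exists 2%nat, (fun i => match i with O => 0 | 1%nat => t | _ => 1 end). split.
    + split; [auto|split; [auto|]]. intros i Hi. destruct i as [|[|i]]; simpl; lra || lia.
    + simpl. ring.
Qed.

(* A partition of [a, b] extends, by the points 0 and 1, to one of [0, 1]. *)
Lemma arclen_sub_finite g a b : rectifiable g -> 0 <= a -> a <= b -> b <= 1 ->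
  exists L, arclen g a b = Fin L.
Proof.
  intros [L0 HL0] Ha Hab Hb.
  set (ext := fun n (p : nat -> R) i =>
                match i with O => 0 | S j => if (j <=? n)%nat then p j else 1 end).
  assert (Hbd : forall s, (exists n p, partition a b n p /\
          s = sumR (fun i => dist (g (p i)) (g (p (S i)))) n) -> s <= L0).
  { intros s [n [p [[Hp0 [Hpn Hpm]] ->]]]. apply Rle_trans with
      (sumR (fun i => dist (g (ext n p i)) (g (ext n p (S i)))) (S (S n))).
    - rewrite sumR_shift. cbn [sumR].
      rewrite (sumR_ext (fun i => dist (g (ext n p (S i))) (g (ext n p (S (S i)))))
                (fun i => dist (g (p i)) (g (p (S i)))) n).
      + pose proof (dist_nonneg (g (ext n p O)) (g (ext n p 1%nat))).
        pose proof (dist_nonneg (g (ext n p (S n))) (g (ext n p (S (S n))))). lra.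
      + intros i Hi. unfold ext.
        replace (i <=? n)%nat with true by (symmetry; apply Nat.leb_le; lia).
        replace (S i <=? n)%nat with true by (symmetry; apply Nat.leb_le; lia). auto.
    - apply (Rsup_le _ _ _ HL0). exists (S (S n)), (ext n p). split; auto.
      split; [auto|split].
      + unfold ext. replace (S n <=? n)%nat with false by (symmetry; apply Nat.leb_gt; lia). auto.
      + intros i Hi. destruct i as [|j]; unfold ext.
        * replace (0 <=? n)%nat with true by (symmetry; apply Nat.leb_le; lia). lra.
        * destruct (Nat.leb_spec j n); destruct (Nat.leb_spec (S j) n); try lia.
          -- apply Hpm; lia.
          -- replace j with n by lia. lra. }
  unfold arclen.
  destruct (Rsup_spec (fun s => exists n p, partition a b n p /\
          s = sumR (fun i => dist (g (p i)) (g (p (S i)))) n))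
    as [[m [H1 _]]|[[H1 _]|[H1 H2]]]; eauto.
  exfalso. apply H2. exists L0. exact Hbd.
Qed.

Lemma arclenR_chord g a b : rectifiable g -> 0 <= a -> a <= b -> b <= 1 ->
  dist (g a) (g b) <= arclenR g a b.
Proof.
  intros. destruct (arclen_sub_finite g a b) as [L HL]; auto.
  unfold arclenR; rewrite HL. apply arclen_chord; auto.
Qed.

Lemma line_integral_sc wU wV g c : 0 < c ->
  (forall t, 0 <= t <= 1 -> wU (sc c (g t)) = / c * wV (g t)) ->
  line_integral wU (fun t => sc c (g t)) = line_integral wV g.
Proof.
  intros Hc Hw. unfold line_integral. f_equal. apply pred_ext. intros s.
  assert (Heq : forall n p, partition 0 1 n p ->
     sumR (fun i => Rinf_R (fun v => exists t, p i <= t <= p (S i) /\ v = wU (sc c (g t)))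
                    * arclenR (fun t => sc c (g t)) (p i) (p (S i))) n =
     sumR (fun i => Rinf_R (fun v => exists t, p i <= t <= p (S i) /\ v = wV (g t))
                    * arclenR g (p i) (p (S i))) n).
  { intros n p Hp. apply sumR_ext. intros i Hi.
    pose proof (partition_range _ _ _ _ Hp i ltac:(lia)).
    pose proof (partition_range _ _ _ _ Hp (S i) ltac:(lia)).
    rewrite arclenR_sc by auto.
    replace (Rinf_R (fun v => exists t, p i <= t <= p (S i) /\ v = wU (sc c (g t))))
      with (Rinf_R (fun v => exists t, p i <= t <= p (S i) /\ v = / c * wV (g t))).
    - rewrite Rinf_scale by (apply Rinv_0_lt_compat; auto). field. lra.
    - f_equal. apply pred_ext.
      intros v; split; intros [t [Ht ->]]; exists t; split; auto; rewrite Hw; auto; lra. }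
  split; intros [n [p [Hp ->]]]; exists n, p; split; auto; rewrite Heq; auto.
Qed.

Lemma line_integral_nonneg w g L : (forall z, 0 <= w z) -> line_integral w g = Fin L -> 0 <= L.
Proof.
  intros Hw HL. refine (Rsup_nonneg _ L _ HL). intros s [n [p [Hp ->]]].
  apply sumR_nonneg. intros i Hi. apply Rmult_le_pos; [|apply arclenR_nonneg].
  apply Rinf_nonneg. intros x [t [_ ->]]; auto.
Qed.

Definition pcont (g : R -> pt) : Prop :=
  forall t, 0 <= t <= 1 -> forall e, 0 < e -> exists d, 0 < d /\
     forall s, 0 <= s <= 1 -> Rabs (s - t) < d -> dist (g s) (g t) < e.

Lemma pcont_sc g c : 0 < c -> pcont g -> pcont (fun t => sc c (g t)).
Proof.
  intros Hc Hg t Ht e He.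
  destruct (Hg t Ht (e / c) ltac:(apply Rdiv_lt_0_compat; lra)) as [d [Hd Hds]].
  exists d; split; auto. intros s Hs Hst. rewrite dist_sc by auto.
  specialize (Hds s Hs Hst). apply Rmult_lt_compat_l with (r := c) in Hds; auto.
  replace (c * (e / c)) with e in Hds by (field; lra). auto.
Qed.

Definition qh_lengths (U : pt -> Prop) (x y : pt) : R -> Prop :=
  fun L => exists g, path_in U x y g /\ rectifiable g /\
             line_integral (fun z => / dG U z) g = Fin L.

Lemma kG_qh_lengths U x y : kG U x y = Rinf_R (qh_lengths U x y).
Proof. reflexivity. Qed.

Lemma qh_lengths_nonneg U x y : forall L, qh_lengths U x y L -> 0 <= L.
Proof.
  intros L [g [_ [_ HL]]]. refine (line_integral_nonneg _ _ _ _ HL).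
  intros z. apply Rinv_nonneg, dG_nonneg.
Qed.

Lemma qh_lengths_sc U V x y g c L : 0 < c ->
  path_in V x y g -> rectifiable g -> line_integral (fun z => / dG V z) g = Fin L ->
  (forall t, 0 <= t <= 1 -> U (sc c (g t)) /\ dG U (sc c (g t)) = c * dG V (g t)) ->
  qh_lengths U (sc c x) (sc c y) L.
Proof.
  intros Hc [Hg0 [Hg1 [_ Hgc]]] [Lg HLg] HL HUV.
  exists (fun t => sc c (g t)). split; [|split].
  - split; [rewrite Hg0; auto|split; [rewrite Hg1; auto|split]].
    + intros t Ht. apply (HUV t Ht).
    + apply pcont_sc; auto.
  - exists (c * Lg). rewrite arclen_sc, HLg by auto. reflexivity.
  - rewrite <- HL. apply line_integral_sc; auto. intros t Ht.
    rewrite (proj2 (HUV t Ht)). apply Rinv_mult.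
Qed.

Definition hit_time (h : R -> pt) (rho : R) : R :=
  Rinf_R (fun t => (0 <= t <= 1) /\ rho <= nrm (h t)).

Lemma hit_time_spec h rho : pcont h -> nrm (h 0) <= rho ->
  (exists ts, 0 <= ts <= 1 /\ rho <= nrm (h ts)) ->
  0 <= hit_time h rho <= 1 /\ nrm (h (hit_time h rho)) = rho /\
  (forall s, 0 <= s <= hit_time h rho -> nrm (h s) <= rho).
Proof.
  intros Hc H0 [ts [Hts Hrts]]. unfold hit_time.
  set (E := fun t => (0 <= t <= 1) /\ rho <= nrm (h t)).
  assert (Hlb : forall x, E x -> 0 <= x) by (intros x [[? ?] ?]; auto).
  assert (Hne : exists s, E s) by (exists ts; split; auto).
  set (T := Rinf_R E).
  assert (HT0 : 0 <= T) by (apply Rinf_ge; auto).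
  assert (HT1 : T <= ts) by (apply Rinf_le with 0; auto; split; auto).
  assert (Hbelow : forall s, 0 <= s < T -> nrm (h s) < rho).
  { intros s Hs. apply Rnot_le_lt. intro Hr. assert (T <= s); [|lra].
    apply Rinf_le with 0; auto. split; [lra|auto]. }
  assert (Hge : rho <= nrm (h T)).
  { apply Rnot_lt_le. intro Hlt.
    destruct (Hc T ltac:(lra) (rho - nrm (h T)) ltac:(lra)) as [d [Hd Hds]].
    destruct (Rinf_approx E 0 d Hlb Hne Hd) as [t [[Ht1 Ht2] Ht3]]. fold T in Ht3.
    assert (T <= t) by (apply Rinf_le with 0; auto; split; auto).
    assert (Hdd := Hds t Ht1 ltac:(apply Rabs_def1; lra)).
    pose proof (nrm_sub_le (h t) (h T)). lra. }
  assert (Hle : nrm (h T) <= rho).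
  { apply Rnot_lt_le. intro Hlt.
    assert (HTp : 0 < T).
    { destruct (Req_dec T 0) as [He|He]; [|lra]. rewrite He in Hlt. lra. }
    destruct (Hc T ltac:(lra) (nrm (h T) - rho) ltac:(lra)) as [d [Hd Hds]].
    set (s := Rmax 0 (T - d/2)).
    assert (Hs1 : 0 <= s) by apply Rmax_l. assert (Hs2 : T - d/2 <= s) by apply Rmax_r.
    assert (Hs3 : s < T) by (unfold s; apply Rmax_lub_lt; lra).
    assert (Hdd := Hds s ltac:(lra) ltac:(apply Rabs_def1; lra)).
    pose proof (nrm_le_dist (h T) (h s)).
    pose proof (Hbelow s ltac:(lra)). lra. }
  split; [lra|split; [lra|]].
  intros s Hs. destruct (Req_dec s T) as [->|Hne']; [lra|]. left; apply Hbelow; lra.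
Qed.

Lemma hit_time_mono h r1 r2 : r1 <= r2 -> (exists ts, 0 <= ts <= 1 /\ r2 <= nrm (h ts)) ->
  hit_time h r1 <= hit_time h r2.
Proof.
  intros Hr [ts [Hts Hr2]]. unfold hit_time at 2. apply Rinf_ge.
  - intros x [Hx1 Hx2]. unfold hit_time. apply Rinf_le with 0.
    + intros y [[? ?] ?]; auto.
    + split; auto; lra.
  - exists ts; split; auto.
Qed.

Lemma hit_time_start h : hit_time h (nrm (h 0)) = 0.
Proof.
  apply Rle_antisym.
  - apply Rinf_le with 0; [intros x [[? ?] ?]; auto|]. split; lra.
  - apply Rinf_nonneg. intros x [[? ?] ?]; auto.
Qed.

(* Crossing the annulus rho <= |z| <= 2 rho costs at least 1/2: the arc is at
   least rho long and, the origin being a boundary point, 1/d_U >= 1/(2 rho). *)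
Lemma annulus_darboux_term U h s t rho :
  is_open U -> boundary U origin -> (forall u, 0 <= u <= 1 -> U (h u)) -> rectifiable h ->
  0 <= s <= t -> t <= 1 -> 0 < rho -> nrm (h s) = rho -> nrm (h t) = 2 * rho ->
  (forall u, s <= u <= t -> nrm (h u) <= 2 * rho) ->
  1 / 2 <= Rinf_R (fun v => exists u, s <= u <= t /\ v = / dG U (h u)) * arclenR h s t.
Proof.
  intros HoU HbU HU Hrect Hst Ht1 Hrho Hs Ht Hann.
  assert (Hweight : / (2 * rho) <= Rinf_R (fun v => exists u, s <= u <= t /\ v = / dG U (h u))).
  { apply Rinf_ge; [|exists (/ dG U (h s)); exists s; split; auto; lra].
    intros x [u [Hu ->]].
    apply Rinv_le_contravar; [apply dG_pos; auto; apply HU; lra|].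
    apply Rle_trans with (nrm (h u)); [apply dG_le_nrm; auto|]. apply Hann; auto. }
  assert (Hlength : rho <= arclenR h s t).
  { apply Rle_trans with (dist (h s) (h t)); [|apply arclenR_chord; auto; lra].
    pose proof (nrm_le_dist (h t) (h s)). lra. }
  replace (1 / 2) with (/ (2 * rho) * rho) by (field; lra).
  apply Rmult_le_compat; auto; [left; apply Rinv_0_lt_compat|]; lra.
Qed.

Definition hit_partition (h : R -> pt) (a : R) (n i : nat) : R :=
  if (i <=? n)%nat then hit_time h (2 ^ i * a) else 1.

Section ExitingPath.

Variables (h : R -> pt) (n : nat).
Hypothesis Hc : pcont h.
Hypothesis Ha : 0 < nrm (h 0).
Hypothesis Hexit : exists ts, 0 <= ts <= 1 /\ 2 ^ n * nrm (h 0) <= nrm (h ts).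

Lemma hit_time_level k : (k <= n)%nat ->
  0 <= hit_time h (2 ^ k * nrm (h 0)) <= 1 /\
  nrm (h (hit_time h (2 ^ k * nrm (h 0)))) = 2 ^ k * nrm (h 0) /\
  (forall s, 0 <= s <= hit_time h (2 ^ k * nrm (h 0)) -> nrm (h s) <= 2 ^ k * nrm (h 0)).
Proof.
  intros Hk. destruct Hexit as [ts [Hts Hts2]].
  assert (1 <= 2 ^ k) by (apply pow_R1_Rle; lra).
  assert (2 ^ k <= 2 ^ n) by (apply Rle_pow; auto; lra).
  apply hit_time_spec; [exact Hc|nra|exists ts; split; auto; nra].
Qed.

Lemma hit_partition_spec : partition 0 1 (S n) (hit_partition h (nrm (h 0)) n).
Proof.
  split; [|split].
  - unfold hit_partition. simpl. rewrite Rmult_1_l. apply hit_time_start.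
  - unfold hit_partition.
    replace (S n <=? n)%nat with false by (symmetry; apply Nat.leb_gt; lia). auto.
  - intros i Hi. unfold hit_partition.
    destruct (Nat.leb_spec i n); destruct (Nat.leb_spec (S i) n); try lia.
    + apply hit_time_mono.
      * simpl. pose proof (pow_lt 2 i ltac:(lra)). nra.
      * destruct Hexit as [ts [Hts Hts2]]. exists ts. split; auto.
        assert (2 ^ S i <= 2 ^ n) by (apply Rle_pow; auto; lra). nra.
    + destruct (hit_time_level i ltac:(lia)); lra.
Qed.

(* Each of the first n pieces of the partition crosses an annulus. *)
Lemma qh_length_exit U L :
  is_open U -> boundary U origin -> (forall t, 0 <= t <= 1 -> U (h t)) -> rectifiable h ->
  line_integral (fun z => / dG U z) h = Fin L -> INR n / 2 <= L.
Proof.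
  intros HoU HbU HU Hr HL.
  set (p := hit_partition h (nrm (h 0)) n).
  set (term := fun i => Rinf_R (fun v => exists t, p i <= t <= p (S i) /\ v = / dG U (h t))
                        * arclenR h (p i) (p (S i))).
  apply Rle_trans with (sumR term (S n)).
  2:{ apply (Rsup_le _ _ _ HL). exists (S n), p. split; auto. apply hit_partition_spec. }
  cbn [sumR].
  assert (0 <= term n).
  { apply Rmult_le_pos; [|apply arclenR_nonneg].
    apply Rinf_nonneg. intros x [t [_ ->]]. apply Rinv_nonneg, dG_nonneg. }
  enough (INR n * (1 / 2) <= sumR term n) by lra.
  apply sumR_lb. intros i Hi.
  destruct hit_partition_spec as [_ [_ Hmono]].
  pose proof (Hmono i ltac:(lia)) as Hm.
  unfold term, p in *. unfold hit_partition in *.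
  replace (i <=? n)%nat with true in * by (symmetry; apply Nat.leb_le; lia).
  replace (S i <=? n)%nat with true in * by (symmetry; apply Nat.leb_le; lia).
  destruct (hit_time_level i ltac:(lia)) as [Hi1 [Hi2 _]].
  destruct (hit_time_level (S i) ltac:(lia)) as [Hj1 [Hj2 Hj3]].
  replace (2 ^ S i * nrm (h 0)) with (2 * (2 ^ i * nrm (h 0))) in * by (simpl; ring).
  apply annulus_darboux_term with (rho := 2 ^ i * nrm (h 0)); auto; try lra.
  - apply Rmult_lt_0_compat; auto. apply pow_lt; lra.
  - intros u Hu. apply Hj3. lra.
Qed.

End ExitingPath.

Lemma exists_small_scale r a b d : 0 < r -> 0 <= a -> 0 <= b -> 0 <= d ->
  exists c, 0 < c /\ c * a < r /\ c * b < r /\ c * d < r.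
Proof.
  intros Hr Ha Hb Hd. exists (r / (a + b + d + 1)).
  assert (Hs : 0 < a + b + d + 1) by lra.
  assert (Hlt : forall u, 0 <= u -> u < a + b + d + 1 -> r / (a + b + d + 1) * u < r).
  { intros u Hu Hus. apply Rmult_lt_reg_r with (a + b + d + 1); auto.
    field_simplify; [nra|lra]. }
  repeat split; [apply Rdiv_lt_0_compat; lra|apply Hlt; lra..].
Qed.

Section SectorNearOrigin.

Variables (alpha r : R) (G : pt -> Prop).
Hypothesis Halpha : 0 < alpha < PI.
Hypothesis HG_open : is_open G.
Hypothesis Hr : 0 < r.
Hypothesis Hloc : forall p, nrm p < r -> (G p <-> Sector alpha p).

Lemma G_sector_small p : nrm p < r / 2 -> (G p <-> Sector alpha p).
Proof. intros Hp. apply Hloc. lra. Qed.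

Lemma boundary_G_origin : boundary G origin.
Proof.
  apply boundary_local with (Sector alpha) r.
  - intros p Hp; symmetry; apply Hloc; auto.
  - unfold nrm; rewrite dist_refl; lra.
  - apply boundary_sector_origin; auto.
Qed.

Lemma dG_G_sector w : nrm w < r / 2 -> dG G w = dG (Sector alpha) w.
Proof. apply dG_local; auto. apply boundary_sector_origin; auto. Qed.

Lemma dG_G_sc c z : 0 < c -> nrm (sc c z) < r / 2 ->
  dG G (sc c z) = c * dG (Sector alpha) z.
Proof. intros Hc Hz. rewrite dG_G_sector by auto. apply dG_sector_sc; auto. Qed.

(* A path from c x to c y in G either stays where G is the dilated sector, or
   climbs through n annuli. *)
Lemma qh_lengths_G_ge_kG_sector x y c n L : 0 < c -> Sector alpha x ->
  2 ^ n * nrm (sc c x) < r / 2 -> kG (Sector alpha) x y < INR n / 2 ->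
  qh_lengths G (sc c x) (sc c y) L -> kG (Sector alpha) x y <= L.
Proof.
  intros Hc Hx Hn Hk [h [Hh [Hhr HhL]]].
  pose proof Hh as [Hh0 [Hh1 [HhG Hhc]]].
  destruct (classic (forall t, 0 <= t <= 1 -> nrm (h t) < 2 ^ n * nrm (sc c x))) as [Hin|Hout].
  - rewrite kG_qh_lengths. apply Rinf_le with 0; [apply qh_lengths_nonneg|].
    rewrite <- (sc_inv' c x), <- (sc_inv' c y) by auto.
    apply qh_lengths_sc with (V := G) (g := h); auto; [apply Rinv_0_lt_compat; auto|].
    intros t Ht. assert (Hsmall : nrm (h t) < r / 2) by (pose proof (Hin t Ht); lra).
    split.
    + apply sector_sc; [apply Rinv_0_lt_compat; auto|].
      apply G_sector_small; auto.
    + rewrite dG_sector_sc, dG_G_sector by (auto; apply Rinv_0_lt_compat; auto).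
      reflexivity.
  - apply not_all_ex_not in Hout. destruct Hout as [ts Hts].
    apply imply_to_and in Hts. destruct Hts as [Hts Hexit]. apply Rnot_lt_le in Hexit.
    rewrite <- Hh0 in Hexit.
    assert (INR n / 2 <= L); [|lra].
    apply (qh_length_exit h n Hhc) with (U := G); auto.
    + rewrite Hh0, nrm_sc by auto. apply Rmult_lt_0_compat; auto.
      apply (sector_nrm_pos alpha); auto.
    + exists ts; split; auto.
    + apply boundary_G_origin.
Qed.

Lemma kG_sector_le_sc x y : Sector alpha x -> Sector alpha y ->
  exists c, 0 < c /\ nrm (sc c x) < r / 2 /\ nrm (sc c y) < r / 2 /\
    kG (Sector alpha) x y <= kG G (sc c x) (sc c y).
Proof.
  intros Hx Hy.
  assert (Hx0 := sector_nrm_pos alpha x Hx). assert (Hy0 := sector_nrm_pos alpha y Hy).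
  destruct (classic (exists L, qh_lengths (Sector alpha) x y L))
    as [[L0 [g [Hg [[Lg HLg] HL0]]]]|Hempty].
  2:{ destruct (exists_small_scale (r / 2) (nrm x) (nrm y) 0) as [c [Hc [Bx [By _]]]]; try lra.
      exists c. rewrite !nrm_sc by auto. repeat split; auto.
      rewrite kG_qh_lengths, Rinf_empty by auto.
      apply Rinf_nonneg, qh_lengths_nonneg. }
  destruct (INR_unbounded (2 * kG (Sector alpha) x y)) as [n Hn].
  pose proof Hg as [Hg0 [Hg1 _]].
  assert (Hg_bound : forall t, 0 <= t <= 1 -> nrm (g t) <= nrm x + Lg).
  { intros t Ht. pose proof (arclen_start_bound g Lg t HLg Ht).
    pose proof (nrm_le_dist (g t) (g 0)). rewrite Hg0 in *. lra. }
  assert (HLg0 : 0 <= Lg) by (pose proof (Hg_bound 0 ltac:(lra)); rewrite Hg0 in *; lra).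
  assert (H2n : 1 <= 2 ^ n) by (apply pow_R1_Rle; lra).
  destruct (exists_small_scale (r / 2) (2 ^ n * nrm x) (nrm y) (nrm x + Lg))
    as [c [Hc [Bx [By Bg]]]]; try nra.
  exists c. rewrite !nrm_sc by auto. repeat split; try nra.
  rewrite (kG_qh_lengths G). apply Rinf_ge.
  - intros L HL. apply qh_lengths_G_ge_kG_sector with c n; auto; [rewrite nrm_sc; nra|lra].
  - exists L0. apply qh_lengths_sc with (V := Sector alpha) (g := g); auto; [exists Lg; auto|].
    intros t Ht.
    assert (Hsmall : nrm (sc c (g t)) < r / 2).
    { rewrite nrm_sc by auto. pose proof (Hg_bound t Ht).
      apply Rle_lt_trans with (c * (nrm x + Lg)); [apply Rmult_le_compat_l|]; lra. }
    split; [apply G_sector_small, sector_sc; auto; apply Hg; auto|apply dG_G_sc; auto].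
Qed.

Lemma AG_set_sector A : AG_set G A -> AG_set (Sector alpha) A.
Proof.
  intros [HA1 HAk]. split; auto. intros x y Hx Hy.
  destruct (kG_sector_le_sc x y Hx Hy) as [c [Hc [Hcx [Hcy Hk]]]].
  rewrite <- (jG_sc G (Sector alpha) c x y) by (auto; apply dG_G_sc; auto).
  apply Rle_trans with (1 := Hk).
  apply HAk; apply G_sector_small; auto; apply sector_sc; auto.
Qed.

End SectorNearOrigin.

Theorem mainTheorem15 (alpha : R) (G : pt -> Prop) (r : R) :
  0 < alpha < PI ->
  domain G ->
  0 < r ->
  (forall p, Ball r p -> (G p <-> Sector alpha p)) ->
  Ele (AG (Sector alpha)) (AG G).
Proof.
  intros Ha [_ [HG_open _]] Hr Hloc.
  assert (Htransfer := AG_set_sector alpha r G Ha HG_open Hr Hloc).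
  unfold AG at 2.
  destruct (excluded_middle_informative (exists A, AG_set G A)) as [[A0 HA0]|HG]; simpl.
  - unfold AG. destruct (excluded_middle_informative (exists A, AG_set (Sector alpha) A))
      as [HS|HS]; simpl.
    + apply Rinf_ge; [|eauto]. intros A HA.
      apply Rinf_le with 1; [intros z [Hz _]; auto|]. apply Htransfer; auto.
    + exfalso. apply HS. exists A0. apply Htransfer; auto.
  - destruct (AG (Sector alpha)); simpl; auto.
Qed.
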